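(* Let $G$ be a parity game graph, let $h$ be an even number with $h\ge\pi(v)$ for all nodes $v$ of $G$, and let $p_E,p_O$ be integers. The procedure $\textsc{Solve}_E(G,h,p_E,p_O)$ (defined in the context) returns a set $W_E$ such that for every set $S$ of nodes of $G$: (i) if $S$ is a dominion for Even and $|S|\le p_E$, then $S\subseteq W_E$; (ii) if $S$ is a dominion for Odd and $|S|\le p_O$, then $S\cap W_E=\emptyset$.
   Context: A parity game graph consists of a finite directed graph in which every node has at least one successor and there are no self-loops, a labeling of each node $v$ by a positive integer priority $\pi(v)$, and a partition of the nodes into nodes owned by Even ($E$) and nodes owned by Odd ($O$). A play is an infinite path; the owner of the current node chooses a successor. A play $v_1v_2\dots$ satisfies LimsupEven if $\limsup_i\pi(v_i)$ is even, and LimsupOdd otherwise. For a set $S$ of nodes, Safety$(S)$ is the set of plays using only nodes of $S$. A strategy of a player maps each finite path ending in a node of that player to a successor; it is winning for a condition from $v$ if all plays from $v$ consistent with it belong to the condition. A dominion for Even is a set $S$ of nodes such that from every $v\in S$ Even has a winning strategy for LimsupEven $\cap$ Safety$(S)$; a dominion for Odd is defined symmetrically with LimsupOdd. For a set $N$ of nodes and a player $P$, the attractor $\textsc{Atr}_P(G,N)$ is the smallest set of nodes containing $N$, containing every node of $P$ having some successor in it, and containing every node of the opponent of $P$ all of whose successors are in it. For an attractor $A$, $G\setminus A$ denotes the game graph obtained by deleting the nodes of $A$ and all edges incident to them. The procedure $\textsc{Solve}_E(G,h,p_E,p_O)$ is: (1) If $G$ has no nodes or $p_E\le 1$, return $\emptyset$.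 (2) Repeat: $N_h :=$ set of nodes of $G$ of priority $h$; $H := G\setminus \textsc{Atr}_E(G,N_h)$; $W_O := \textsc{Solve}_O(H,h-1,\lfloor p_O/2\rfloor,p_E)$; $G := G\setminus\textsc{Atr}_O(G,W_O)$; until $W_O=\emptyset$. (3) Once: $N_h :=$ nodes of $G$ of priority $h$; $H := G\setminus\textsc{Atr}_E(G,N_h)$; $W_O := \textsc{Solve}_O(H,h-1,p_O,p_E)$; $G := G\setminus\textsc{Atr}_O(G,W_O)$. (4) While $W_O\neq\emptyset$: perform the same body as in step (2). (5) Return the set of nodes of the current $G$. The procedure $\textsc{Solve}_O(G,h,p_O,p_E)$ is obtained from $\textsc{Solve}_E$ by swapping the roles of $E$ and $O$ everywhere (it returns $\emptyset$ if $G$ is empty or $p_O\le 1$, and calls $\textsc{Solve}_E(H,h-1,\lfloor p_E/2\rfloor,p_O)$ or $\textsc{Solve}_E(H,h-1,p_E,p_O)$, using $\textsc{Atr}_O$ to build $H$ and $\textsc{Atr}_E$ to remove returned sets). *)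

From HB Require Import structures.
From mathcomp Require Import all_boot all_order all_algebra.
Set Implicit Arguments. Unset Strict Implicit. Unset Printing Implicit Defensive.
Import Order.TTheory GRing.Theory Num.Theory.

(* Players are booleans: [true] = Even, [false] = Odd.
   Subgames (the "G" manipulated by the procedure) are node sets U : {set V},
   with the edges of [e] restricted to U. *)

Section ParityGame.
Variables (V : finType) (e : rel V) (own : V -> bool) (pri : V -> nat).

Definition is_play (v : nat -> V) : Prop := forall i, e (v i) (v i.+1).

Definition limsup_is (s : nat -> nat) (m : nat) : Prop :=
  (forall N, exists2 i, N <= i & s i = m) /\
  (exists N, forall i, N <= i -> s i <= m).

Definition LimsupEven (v : nat -> V) : Prop :=
  exists2 m, limsup_is (fun i => pri (v i)) m & ~~ odd m.
Definition LimsupOdd (v : nat -> V) : Prop :=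
  exists2 m, limsup_is (fun i => pri (v i)) m & odd m.

Definition Limsup_of (P : bool) (v : nat -> V) : Prop :=
  if P then LimsupEven v else LimsupOdd v.

Definition Safety (S : {set V}) (v : nat -> V) : Prop := forall i, v i \in S.

Definition is_strategy (P : bool) (sigma : seq V -> V) : Prop :=
  forall x s, path e x s -> own (last x s) = P -> e (last x s) (sigma (x :: s)).

Definition consistent (P : bool) (sigma : seq V -> V) (v : nat -> V) : Prop :=
  forall i, own (v i) = P -> v i.+1 = sigma (mkseq v i.+1).

Definition winning_from (P : bool) (sigma : seq V -> V)
    (cond : (nat -> V) -> Prop) (x : V) : Prop :=
  forall v, is_play v -> v 0 = x -> consistent P sigma v -> cond v.

Definition dominion (P : bool) (S : {set V}) : Prop :=
  forall x, x \in S -> exists sigma, is_strategy P sigma /\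
    winning_from P sigma (fun v => Limsup_of P v /\ Safety S v) x.

Definition attr (P : bool) (U N : {set V}) : {set V} :=
  fixset (fun X : {set V} =>
    (N :&: U) :|:
    [set v in U | if own v == P
                  then [exists w, [&& w \in U, e v w & w \in X]]
                  else [forall w, (w \in U) && e v w ==> (w \in X)]]).

(* solve P h U p q : Solve_E(U,h,p,q) if P = true, Solve_O(U,h,p,q) if P = false;
   p is the budget of player P, q that of the opponent. *)
Fixpoint solve (P : bool) (h : nat) (U : {set V}) (p q : int) {struct h}
    : {set V} :=
  match h with
  | 0 => set0
  | h'.+1 =>
    if (U == set0) || (p <= 1)%R then set0 else
    let step (b : int) (X : {set V}) :=
      let H := X :\: attr P X [set v in X | pri v == h] in
      let W := solve (~~ P) h' H b p in
      (X :\: attr (~~ P) X W, W) in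
    let fix rep (n : nat) (X : {set V}) {struct n} : {set V} :=
      match n with
      | 0 => X
      | n'.+1 => let XW := step (q %/ 2)%Z X in
                 if XW.2 == set0 then XW.1 else rep n' XW.1
      end in
    let U2 := rep #|V|.+1 U in
    let U3W3 := step q U2 in
    if U3W3.2 == set0 then U3W3.1 else rep #|V|.+1 U3W3.1
  end.

Definition SolveE (U : {set V}) (h : nat) (pE pO : int) := solve true h U pE pO.
Definition SolveO (U : {set V}) (h : nat) (pO pE : int) := solve false h U pO pE.

End ParityGame.

(* The specification is proved by induction on h, simultaneously for both
   players and for every deadlock-free subgame U in place of the whole game.

   The heart of the argument: let T be a nonempty dominion of the opponent of P
   in a subgame X whose top priority h has the parity of P, and let H be X minus
   the P-attractor of the priority-h nodes. Follow the opponent's winning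
   strategy from a node of T. If some finite play can never again be forced by
   P into the attractor, the nodes reachable after it form a nonempty opponent
   dominion of H inside T. Otherwise P can force a visit to priority h from
   every finite play, which yields a conforming play with limsup h, won by P.

   Consequently a dominion of P is never caught by the recursive calls (by
   induction) and so survives every round, while an opponent dominion S loses
   in each round a nonempty part caught by the recursive call as soon as the
   budget allows. When a loop with half budget stalls, every such part exceeds
   half the budget, so the full-budget round removes more than half of S and
   the final loop disposes of the rest. *)

From HB Require Import structures.
From mathcomp Require Import all_boot all_order all_algebra zify.
From mathcomp Require Import boolp.
Import Order.TTheory GRing.Theory Num.Theory.
Set Implicit Arguments. Unset Strict Implicit. Unset Printing Implicit Defensive.

(** * Attractors *)

Section Attractor.
Variables (V : finType) (e : rel V) (own : V -> bool).

Definition deadlock_free (U : {set V}) :=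
  forall v, v \in U -> exists2 w, w \in U & e v w.

Definition attr_step (P : bool) (U N X : {set V}) : {set V} :=
  (N :&: U) :|:
  [set v in U | if own v == P
                then [exists w, [&& w \in U, e v w & w \in X]]
                else [forall w, (w \in U) && e v w ==> (w \in X)]].

Section AttractorLemmas.
Variables (P : bool) (U N : {set V}).
Local Notation A := (attr e own P U N).

Lemma attr_step_mono : {homo attr_step P U N : X Y / X \subset Y}.
Proof.
move=> X Y /subsetP sXY; apply/subsetP => v; rewrite !inE.
case/orP=> [-> // | /andP[vU H]]; apply/orP; right; rewrite vU /=; move: H.
case: (own v == P).
  by case/existsP=> w /and3P[wU evw wX]; apply/existsP; exists w; rewrite wU evw sXY.
by move/forallP=> H; apply/forallP=> w; apply/implyP=> /(implyP (H w)); apply: sXY.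
Qed.

Lemma attr_stepK : attr_step P U N A = A.
Proof. exact: (fixsetK attr_step_mono). Qed.

Lemma attr_ind (Q : V -> Prop) :
  (forall v, v \in U -> v \in N -> Q v) ->
  (forall v w, v \in U -> own v = P -> w \in U -> e v w -> Q w -> Q v) ->
  (forall v, v \in U -> own v != P -> (forall w, w \in U -> e v w -> Q w) -> Q v) ->
  {in A, forall v, Q v}.
Proof.
move=> QN QP QnP; rewrite /attr /fixset; elim: #|V| => [|k IHk] v; first by rewrite inE.
rewrite [iter _ _ _]/= !inE => /orP[/andP[vN vU] | /andP[vU]]; first exact: QN.
case: eqP => [ovP /existsP[w /and3P[wU evw /IHk Qw]] | /eqP ovP /forallP Hv].
  exact: QP evw Qw.
by apply: QnP => // w wU evw; apply: IHk; have := Hv w; rewrite wU evw.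
Qed.

Lemma mem_attr v : v \in N -> v \in U -> v \in A.
Proof. by move=> vN vU; rewrite -attr_stepK !inE vN vU. Qed.

Lemma attrC_closed v w :
  v \in U :\: A -> own v = P -> w \in U -> e v w -> w \in U :\: A.
Proof.
rewrite !inE => /andP[vA vU] ovP wU evw; rewrite wU andbT; apply: contra vA => wA.
by rewrite -attr_stepK !inE vU ovP eqxx; apply/orP; right; apply/existsP; exists w; rewrite wU evw.
Qed.

Lemma deadlock_free_attrC : deadlock_free U -> deadlock_free (U :\: A).
Proof.
move=> dU v vUA; have [ovP | ovP] := eqVneq (own v) P.
  have [w wU evw] := dU v (subsetP (subsetDl U A) v vUA).
  by exists w => //; exact: attrC_closed evw.
move: vUA; rewrite -{1}attr_stepK !inE (negbTE ovP) => /andP[/norP[_ +] vU].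
rewrite vU /= => /forallPn[w]; rewrite negb_imply => /andP[/andP[wU evw] wA].
by exists w; rewrite // inE wA.
Qed.

End AttractorLemmas.

Lemma attr_set0 P U : deadlock_free U -> attr e own P U set0 = set0.
Proof.
move=> dU; apply/setP=> v; rewrite inE; apply/negP => vA.
apply: (attr_ind (Q := fun=> False) _ _ _ vA) => [w _|//|w wU _ Hw]; first by rewrite inE.
by have [z zU ewz] := dU w wU; exact: Hw ewz.
Qed.

End Attractor.

(** * Plays conforming to a strategy *)

Lemma take_mkseq (T : Type) (f : nat -> T) n m : take n (mkseq f m) = mkseq f (minn n m).
Proof. by rewrite /mkseq -map_take take_iota. Qed.

Lemma mkseqD (T : Type) (f : nat -> T) m n :
  mkseq f (m + n) = mkseq f m ++ mkseq (fun i => f (m + i)) n.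
Proof.
by rewrite /mkseq iotaD map_cat; congr (_ ++ _); rewrite -[0 + m]addn0 iotaDl -map_comp.
Qed.

(* Follows [w], then continues with [v], whose first element repeats the last
   one of [w]. *)
Definition splice (T : Type) (x0 : T) (w : seq T) (v : nat -> T) i :=
  if i < size w then nth x0 w i else v (i.+1 - size w).

Lemma mkseq_splice (T : Type) (x0 : T) w v n :
  mkseq (splice x0 w v) (size w + n) = w ++ behead (mkseq v n.+1).
Proof.
rewrite mkseqD; congr (_ ++ _).
  rewrite -[RHS](mkseq_nth x0) /mkseq; apply/eq_in_map => i.
  by rewrite mem_iota /splice add0n => /= ->.
rewrite /mkseq /= -[1]addn0 iotaDl -map_comp; apply: eq_map => i.
by rewrite /splice /= ltnNge leq_addr; congr v; lia.
Qed.

Lemma splice_shift (T : Type) (x0 : T) w v i : 0 < size w -> v 0 = last x0 w ->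
  splice x0 w v (i + (size w).-1) = v i.
Proof.
case: w => // y w _ vlast; rewrite /splice /=.
case: i => [|i]; first by rewrite add0n ltnSn vlast; exact: nth_last.
by case: ifP => [|_]; [lia | congr v; lia].
Qed.

Lemma extension_limit (T : Type) (x0 : T) (I : seq T -> Prop) (f : seq T -> seq T) l0 :
    I l0 -> (forall l, I l -> I (f l) /\ exists2 t, f l = l ++ t & 0 < size t) ->
  exists v : nat -> T, forall k,
    [/\ I (iter k f l0), k <= size (iter k f l0) & iter k f l0 = mkseq v (size (iter k f l0))].
Proof.
move=> Il0 fI; pose L k := iter k f l0.
have IL k : I (L k) by elim: k => //= k /fI[].
have sizeL k : k <= size (L k).
  elim: k => //= k IHk; have [_ [t -> t0]] := fI _ (IL k).
  by rewrite size_cat; lia.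
have prefixL j k : j <= k -> exists t, L k = L j ++ t.
  move/subnK <-; elim: (k - j) => [|i [t Et]]; first by exists [::]; rewrite cats0.
  have [_ [t' Et' _]] := fI _ (IL (i + j)).
  by exists (t ++ t'); rewrite addSn /= -/(L _) Et' Et catA.
exists (fun i => nth x0 (L i.+1) i) => k; rewrite -/(L k); split; [exact: IL | exact: sizeL |].
apply: (@eq_from_nth _ x0) => [|i ltik]; first by rewrite size_mkseq.
rewrite nth_mkseq //.
have [/prefixL[t ->] | /ltnW/prefixL[t ->]] := leqP i.+1 k; rewrite nth_cat.
  by rewrite (sizeL i.+1).
by rewrite ltik.
Qed.

Section Plays.
Variables (V : finType) (e : rel V) (own : V -> bool).

Definition edge_in (U : {set V}) : rel V := fun a b => [&& a \in U, b \in U & e a b].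

Inductive conform (U : {set V}) (P : bool) (sg : seq V -> V) (x : V) : seq V -> Prop :=
| conform1 : x \in U -> conform U P sg x [:: x]
| conform_rcons l y : conform U P sg x l -> edge_in U (last x l) y ->
    (own (last x l) = P -> y = sg l) -> conform U P sg x (rcons l y).

Lemma edge_in_subset (U U' : {set V}) a b :
  U \subset U' -> edge_in U a b -> edge_in U' a b.
Proof. by move/subsetP=> sUU' /and3P[aU bU eab]; rewrite /edge_in !sUU'. Qed.

Lemma conform_subset (U U' : {set V}) P sg x l :
  U \subset U' -> conform U P sg x l -> conform U' P sg x l.
Proof.
move=> sUU'; elim=> {l} [xU | l y _ IHl /(edge_in_subset sUU') ely lP].
  by constructor; apply: (subsetP sUU').
by constructor.
Qed.

Lemma last_mkseq (v : nat -> V) x n : last x (mkseq v n.+1) = v n.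
Proof. by rewrite mkseqS last_rcons. Qed.

Section Conform.
Variables (U : {set V}) (P : bool) (sg : seq V -> V) (x : V).
Local Notation conform := (conform U P sg x).

Lemma conform_cons l : conform l -> exists s, l = x :: s.
Proof. by elim=> {l} [_ | l y _ [s ->] _ _]; [exists [::] | exists (rcons s y)]. Qed.

Lemma conform_last l : conform l -> last x l \in U.
Proof. by case=> {l} // l y _ /and3P[_ yU _] _; rewrite last_rcons. Qed.

Lemma conform_rconsP l y : conform (rcons l y) -> l != [::] ->
  [/\ conform l, edge_in U (last x l) y & (own (last x l) = P -> y = sg l)].
Proof.
move Ely: (rcons l y) => ly cly; case: cly Ely => [_ | l' y' cl' ely' l'P] Ely.
  by case: l Ely => [|? []].
by case/rcons_inj: Ely => -> ->.
Qed.

Lemma conform_prefix l t : conform (l ++ t) -> l != [::] -> conform l.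
Proof.
move=> + l0; elim/last_ind: t => [|t y IHt]; first by rewrite cats0.
rewrite -rcons_cat => clty; apply: IHt.
have ltn0 : l ++ t != [::] by case: (l) l0.
by case: (conform_rconsP clty ltn0).
Qed.

Lemma conform_path l : conform l -> path (edge_in U) x (behead l).
Proof.
elim=> {l} // l y cl; have [s ->] := conform_cons cl => /= IHl exy _.
by rewrite rcons_path IHl.
Qed.

Lemma conform_playP (v : nat -> V) :
  (forall n, conform (mkseq v n.+1)) <->
  [/\ v 0 = x, forall i, edge_in U (v i) (v i.+1) & consistent own P sg v].
Proof.
split=> [cv | [v0 ev cv]].
  have step i : [/\ conform (mkseq v i.+1), edge_in U (v i) (v i.+1) &
                   (own (v i) = P -> v i.+1 = sg (mkseq v i.+1))].
    have := cv i.+1; rewrite mkseqS => /conform_rconsP.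
    by rewrite -size_eq0 size_mkseq last_mkseq; apply.
  split=> [|i|i]; first by have [s [->]] := conform_cons (cv 0).
    by case: (step i).
  by case: (step i).
elim=> [|n IHn]; first by rewrite /mkseq /= v0; constructor; have /andP[] := ev 0; rewrite v0.
by rewrite mkseqS; constructor; rewrite ?last_mkseq //; apply: cv.
Qed.

Lemma conform_mkseq_prefix (v : nat -> V) m n :
  conform (mkseq v m) -> 0 < n <= m -> conform (mkseq v n).
Proof.
move=> cvm /andP[n0 nm]; rewrite -(minn_idPl nm) -take_mkseq.
apply: (@conform_prefix _ (drop n (mkseq v m))); first by rewrite cat_take_drop.
by rewrite -size_eq0 size_take_min size_mkseq (minn_idPl nm) -lt0n.
Qed.

Lemma conform_step l : deadlock_free e U ->
    (forall l, conform l -> own (last x l) = P -> edge_in U (last x l) (sg l)) ->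
  conform l -> exists y, conform (rcons l y).
Proof.
move=> dU legal cl; have [olP | olnP] := eqVneq (own (last x l)) P.
  by exists (sg l); apply: conform_rcons (legal _ cl olP) _.
have [y yU ely] := dU _ (conform_last cl); exists y; apply: conform_rcons.
- exact: cl.
- by rewrite /edge_in (conform_last cl) yU.
- by move=> olP; rewrite olP eqxx in olnP.
Qed.

Lemma conform_limit f l0 : conform l0 ->
    (forall l, conform l -> conform (f l) /\ exists2 t, f l = l ++ t & 0 < size t) ->
  exists v, [/\ forall n, conform (mkseq v n.+1) &
    forall k, [/\ conform (iter k f l0), k <= size (iter k f l0) &
                  iter k f l0 = mkseq v (size (iter k f l0))]].
Proof.
move=> cl0 fext; have [v Hv] := extension_limit x cl0 fext.
exists v; split=> // n.
have [cLn szLn ELn] := Hv n.+1.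
by apply: (@conform_mkseq_prefix _ (size (iter n.+1 f l0))); rewrite -?ELn.
Qed.
End Conform.

Lemma conform_shift (H U : {set V}) P sg x w l : H \subset U -> conform U P sg x w ->
    conform H P (fun l => sg (w ++ behead l)) (last x w) l ->
  conform U P sg x (w ++ behead l) /\ last x (w ++ behead l) = last (last x w) l.
Proof.
move=> sHU cw; elim=> {l} [_ | l y cl [IHc IHl] ely lP]; first by rewrite cats0.
have [s El] := conform_cons cl; rewrite El /= in IHc IHl ely lP *.
rewrite -rcons_cat !last_rcons; split=> //.
by apply: conform_rcons => //; rewrite IHl //; apply: edge_in_subset ely.
Qed.

End Plays.

(** * Dominions of subgames *)

Lemma limsup_is_shift s m k : limsup_is s m -> limsup_is (fun i => s (i + k)) m.
Proof.
move=> [infm [N Nm]]; split=> [M | ]; last by exists N => i Ni; apply: Nm; lia.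
by have [i Mki sim] := infm (M + k); exists (i - k); rewrite ?subnK //; lia.
Qed.

Lemma limsup_is_recurrent s h m : (forall i, s i <= h) ->
  (forall N, exists2 i, N <= i & s i = h) -> limsup_is s m -> m = h.
Proof.
move=> sh infh [infm [N Nm]]; have [i _ sim] := infm 0; have [j /Nm sjm sjh] := infh N.
by apply/eqP; rewrite eqn_leq -{1}sim sh -sjh sjm.
Qed.

Section Dominions.
Variables (V : finType) (e : rel V) (own : V -> bool) (pri : V -> nat).
Local Notation conform := (conform e own).
Local Notation edge_in := (edge_in e).
Local Notation Limsup_of := (Limsup_of pri).

Lemma Limsup_of_shift P v k : Limsup_of P v -> Limsup_of P (fun i => v (i + k)).
Proof. by case: P => /= -[m /(limsup_is_shift k) ms pm]; exists m. Qed.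

Lemma Limsup_of_recurrent P v h : Limsup_of P v -> (forall i, pri (v i) <= h) ->
  (forall N, exists2 i, N <= i & pri (v i) = h) -> odd h = ~~ P.
Proof.
by case: P => /= -[m /limsup_is_recurrent ms pm] vh infh; rewrite -(ms h) //; case: odd pm.
Qed.

(* Stated on finite conforming prefixes, so that restricting a dominion to a
   subgame never requires extending a prefix to an infinite play. *)
Definition dominion_in (U : {set V}) (P : bool) (S : {set V}) : Prop :=
  S \subset U /\ forall x, x \in S -> exists sg : seq V -> V,
    [/\ forall l, conform U P sg x l -> own (last x l) = P -> edge_in U (last x l) (sg l),
        forall l, conform U P sg x l -> last x l \in S &
        forall v, (forall n, conform U P sg x (mkseq v n.+1)) -> Limsup_of P v].

Section DominionIn.
Variables (U : {set V}) (P : bool) (S : {set V}).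
Hypothesis domS : dominion_in U P S.

Lemma dominion_in_closed y : y \in S ->
  (own y = P -> exists2 z, z \in S & edge_in U y z) /\
  (own y != P -> forall z, edge_in U y z -> z \in S).
Proof.
move=> yS; have [/subsetP sSU /(_ y yS)[sg [legal safe _]]] := domS.
have cy : conform U P sg y [:: y] by constructor; apply: sSU.
split=> [oyP | /negbTE oyP z eyz].
  have eysg := legal _ cy oyP; exists (sg [:: y]) => //.
  by have := safe _ (conform_rcons cy eysg (fun=> erefl)); rewrite last_rcons.
have czy : conform U P sg y (rcons [:: y] z).
  by apply: conform_rcons => //= oy; rewrite oy eqxx in oyP.
by have := safe _ czy; rewrite last_rcons.
Qed.

Lemma dominion_in_card_le1 : (forall v, ~~ e v v) -> deadlock_free e U ->
  #|S| <= 1 -> S = set0.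
Proof.
move=> noloop dU leS1; apply/setP=> y; rewrite inE; apply/negP=> yS.
have onlyy z : z \in S -> z = y.
  move=> zS; apply/eqP; apply: contraTT leS1 => zy.
  by rewrite -ltnNge (cardD1 y) yS (cardD1 z) !inE zy zS.
have yU : y \in U by apply: (subsetP domS.1).
have [Pmove nPmove] := dominion_in_closed yS.
have [/Pmove[z /onlyy -> /and3P[_ _]] | oyP] := eqVneq (own y) P.
  by rewrite (negbTE (noloop y)).
have [z zU eyz] := dU y yU.
have /onlyy zy := nPmove oyP z (introT and3P (And3 yU zU eyz)).
by move: eyz; rewrite zy (negbTE (noloop y)).
Qed.

Lemma dominion_in_restrict (Y : {set V}) : Y \subset U ->
    (forall y z, y \in S -> y \in Y -> own y = P -> z \in U -> e y z -> z \in S -> z \in Y) ->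
  dominion_in Y P (S :&: Y).
Proof.
move=> sYU Pstays; split=> [|x /setIP[xS xY]]; first exact: subsetIr.
have [_ /(_ x xS)[sg [legal safe win]]] := domS.
exists sg; split=> [l cl olP | l cl | v cv].
- have clU := conform_subset sYU cl; have /and3P[_ sgU esg] := legal _ clU olP.
  have sgS : sg l \in S.
    by have := safe _ (conform_rcons clU (legal _ clU olP) (fun=> erefl)); rewrite last_rcons.
  have sgY := Pstays _ _ (safe _ clU) (conform_last cl) olP sgU esg sgS.
  by rewrite /edge_in (conform_last cl) esg sgY.
- by rewrite inE (safe _ (conform_subset sYU cl)) (conform_last cl).
- by apply: win => n; apply: conform_subset sYU (cv n).
Qed.

Lemma dominion_in_attr_disjoint (W : {set V}) :
  S :&: W = set0 -> S :&: attr e own (~~ P) U W = set0.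
Proof.
move=> SW; apply/setP=> y; rewrite inE in_set0 andbC; apply/negP=> /andP[yA]; apply/negP.
move: y yA.
apply: (attr_ind (Q := fun y => y \notin S)) => [y _ yW | y z yU oy zU eyz zS | y yU oy succS].
- by apply: contraT; rewrite negbK => yS; move/setP: SW => /(_ y); rewrite !inE yS yW.
- apply: contra zS => yS; have oyP : own y != P by rewrite oy; case: (P).
  by apply: (dominion_in_closed yS).2 => //; rewrite /edge_in yU zU.
- apply/negP=> yS; have oyP : own y = P by move: oy; case: (own y); case: P.
  by have [z zS /and3P[_ zU eyz]] := (dominion_in_closed yS).1 oyP; move/negP: (succS z zU eyz).
Qed.

End DominionIn.

Lemma dominion_in_setT P S : (forall v, exists w, e v w) ->
  dominion e own pri P S -> dominion_in [set: V] P S.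
Proof.
move=> succ domS; split=> [|x xS]; first exact: subsetT.
have edge_inT : edge_in [set: V] =2 e by move=> a b; rewrite /edge_in !inE.
have [sg [stratP winP]] := domS x xS; exists sg.
have legal l : conform setT P sg x l -> own (last x l) = P -> edge_in setT (last x l) (sg l).
  move=> cl; have [s El] := conform_cons cl; have := conform_path cl.
  by rewrite El edge_inT (eq_path edge_inT); apply: stratP.
have play v : (forall n, conform setT P sg x (mkseq v n.+1)) -> Limsup_of P v /\ Safety S v.
  by move=> /conform_playP[v0 ev cv]; apply: winP => // i; rewrite -edge_inT.
split=> // [l cl | v /play[] //].
pose next l := rcons l (if own (last x l) == P then sg l else xchoose (succ (last x l))).
have nextP l' : conform setT P sg x l' ->
    conform setT P sg x (next l') /\ exists2 t, next l' = l' ++ t & 0 < size t.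
  move=> cl'; split; last by rewrite /next -cats1; eexists.
  rewrite /next; case: eqP => [olP | olnP].
    by apply: (conform_rcons cl' (legal _ cl' olP)).
  by apply: conform_rcons => //; rewrite edge_inT; apply: xchooseP.
have [v [cv /(_ 0)[_ _ El]]] := conform_limit cl nextP.
have [s Els] := conform_cons cl; rewrite /= Els in El.
by rewrite Els El last_mkseq; have [_] := play v cv.
Qed.

End Dominions.

(** * The top-priority attractor *)

Section TopPriority.
Variables (V : finType) (e : rel V) (own : V -> bool) (pri : V -> nat).
Local Notation conform := (conform e own).
Local Notation edge_in := (edge_in e).
Local Notation dominion_in := (dominion_in e own pri).

Section Play.
Variables (X : {set V}) (Q : bool) (sg : seq V -> V) (x : V).
Hypothesis legal :
  forall l, conform X Q sg x l -> own (last x l) = Q -> edge_in X (last x l) (sg l).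

Lemma conform_reach_attr (N : {set V}) g : conform X Q sg x g ->
    last x g \in attr e own (~~ Q) X N ->
  exists m, conform X Q sg x (g ++ m) /\ last x (g ++ m) \in N.
Proof.
move=> cg gA; suff reach : {in attr e own (~~ Q) X N, forall y g, last x g = y ->
    conform X Q sg x g -> exists m, conform X Q sg x (g ++ m) /\ last x (g ++ m) \in N}.
  exact: reach gA _ erefl cg.
apply: attr_ind => [y _ yN | y z yU oy zU eyz IHz | y yU oy IHz] {cg gA}g gy cg.
- by exists [::]; rewrite cats0 gy.
- have czg : conform X Q sg x (rcons g z).
    apply: conform_rcons; rewrite ?gy /edge_in ?yU ?zU ?eyz // => oyQ.
    by move: oy; rewrite oyQ; case: (Q).
  have [m [cm mN]] := IHz _ (last_rcons x g z) czg.
  by exists (z :: m); rewrite -cat_rcons.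
- have oyQ : own y = Q by move: oy; case: (own y); case: (Q).
  have olg : own (last x g) = Q by rewrite gy.
  have csg : conform X Q sg x (rcons g (sg g)) by apply: conform_rcons (legal cg olg) _.
  have /and3P[_ sgU esg] := legal cg olg; rewrite gy in esg.
  have [m [cm mN]] := IHz _ sgU esg _ (last_rcons x g (sg g)) csg.
  by exists (sg g :: m); rewrite -cat_rcons.
Qed.

Lemma conform_recurrent (N : {set V}) : x \in X ->
    (forall g, conform X Q sg x g ->
       exists2 m, conform X Q sg x (g ++ m) /\ last x (g ++ m) \in N & 0 < size m) ->
  exists v, (forall n, conform X Q sg x (mkseq v n.+1)) /\
            (forall M, exists2 i, M <= i & v i \in N).
Proof.
move=> xX reachN.
have next g : exists g', conform X Q sg x g ->
    [/\ conform X Q sg x g', exists2 t, g' = g ++ t & 0 < size t & last x g' \in N].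
  have [cg | ncg] := EM (conform X Q sg x g); last by exists g.
  by have [m [cm mN] m0] := reachN g cg; exists (g ++ m) => _; split=> //; exists m.
pose f g := sval (cid (next g)).
have fP g : conform X Q sg x g ->
    [/\ conform X Q sg x (f g), exists2 t, f g = g ++ t & 0 < size t & last x (f g) \in N].
  exact: svalP (cid (next g)).
have fext g : conform X Q sg x g ->
    conform X Q sg x (f g) /\ exists2 t, f g = g ++ t & 0 < size t.
  by move=> /fP[].
have cx : conform X Q sg x [:: x] by constructor.
have [v [cv Lv]] := conform_limit cx fext.
exists v; split=> // M; have [cLM _ _] := Lv M; have [_ szL EL] := Lv M.+1.
have [_ _] := fP _ cLM; rewrite -[f _]/(iter M.+1 f [:: x]).
move: szL EL; case: (size _) => // n szn ->; rewrite last_mkseq.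
by exists n.
Qed.

Section Residual.
Variables (H T : {set V}) (u : seq V).
Hypotheses (sHX : H \subset X) (cu : conform X Q sg x u).
Hypothesis safe : forall l, conform X Q sg x l -> last x l \in T.
Hypothesis win : forall v, (forall n, conform X Q sg x (mkseq v n.+1)) -> Limsup_of pri Q v.
Hypothesis stay : forall m, conform X Q sg x (u ++ m) -> last x (u ++ m) \in H.

Lemma residual_dominion_in : exists Z, [/\ Z != set0, Z \subset T & dominion_in H Q Z].
Proof.
pose Z := [set z | `[< exists m, conform X Q sg x (u ++ m) /\ last x (u ++ m) = z >]].
have inZ m : conform X Q sg x (u ++ m) -> last x (u ++ m) \in Z.
  by move=> cm; rewrite inE; apply/asboolP; exists m.
have ZP z : z \in Z -> exists m, conform X Q sg x (u ++ m) /\ last x (u ++ m) = z.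
  by rewrite inE => /asboolP.
have sZH : Z \subset H by apply/subsetP => z /ZP[m [cm <-]]; apply: stay.
exists Z; split.
- by apply/set0Pn; exists (last x u); rewrite -[u]cats0 inZ ?cats0.
- by apply/subsetP => z /ZP[m [cm <-]]; apply: safe.
split=> // z /ZP[m [cw <-]]; set w := u ++ m in cw *.
have inZw t : conform X Q sg x (w ++ t) -> last x (w ++ t) \in Z.
  by rewrite /w -catA; apply: inZ.
have shift l := @conform_shift _ _ _ H X Q sg x w l sHX cw.
exists (fun l => sg (w ++ behead l)); split=> [l cl olQ | l cl | v cv].
- have [cwl lE] := shift l cl; rewrite -lE in olQ *.
  have /and3P[_ _ esg] := legal cwl olQ.
  have : last x (w ++ rcons (behead l) (sg (w ++ behead l))) \in Z.
    by apply: inZw; rewrite -rcons_cat; apply: conform_rcons (legal cwl olQ) _.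
  rewrite last_cat last_rcons => /(subsetP sZH) sgH.
  by rewrite /edge_in sgH esg lE (conform_last cl).
- by have [cwl <-] := shift l cl; apply: inZw.
have v0 : v 0 = last x w by have [s [->]] := conform_cons (cv 0).
have w0 : 0 < size w by have [s ->] := conform_cons cw.
suff -> : v = (fun i => splice x w v (i + (size w).-1)).
  apply/Limsup_of_shift/win => n.
  apply: (@conform_mkseq_prefix _ _ _ _ _ _ _ _ (size w + n)); last by lia.
  by rewrite mkseq_splice; have [] := shift _ (cv n).
by apply: funext => i; rewrite splice_shift.
Qed.

End Residual.
End Play.

Lemma dominion_in_attrC_top (X T : {set V}) P h :
    deadlock_free e X -> {in X, forall y, pri y <= h} -> odd h = ~~ P ->
    dominion_in X (~~ P) T -> T != set0 ->
  exists Z, [/\ Z != set0, Z \subset T &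
              dominion_in (X :\: attr e own P X [set v in X | pri v == h]) (~~ P) Z].
Proof.
move=> dX leh oh [sTX domT] /set0Pn[x xT].
set N := [set v in X | pri v == h]; set A := attr e own P X N.
have [sg [legal safe win]] := domT x xT.
(* Either some conforming prefix can never again be forced into [A], or every
   one can be forced into [A], hence to [N]. *)
have [[u [cu stay]] | noescape] := EM (exists u, conform X (~~ P) sg x u /\
    forall m, conform X (~~ P) sg x (u ++ m) -> last x (u ++ m) \notin A).
  apply: (residual_dominion_in legal (subsetDl X A) cu safe win) => m cm.
  by rewrite inE stay // (conform_last cm).
exfalso.
have reachA g : conform X (~~ P) sg x g ->
    exists m, conform X (~~ P) sg x (g ++ m) /\ last x (g ++ m) \in A.
  move=> cg; apply: contrapT => noreach; apply: noescape; exists g; split=> // m cm.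
  by apply/negP => mA; apply: noreach; exists m.
have reachN g : conform X (~~ P) sg x g ->
    exists2 m, conform X (~~ P) sg x (g ++ m) /\ last x (g ++ m) \in N & 0 < size m.
  move=> cg; have [y cgy] := conform_step dX legal cg.
  have [m [cm mA]] := reachA _ cgy; rewrite /A -[P]negbK in mA.
  have [m' [cm' m'N]] := conform_reach_attr legal cm mA.
  by exists (y :: m ++ m') => //; rewrite -cat_rcons catA.
have [v [cv recN]] := conform_recurrent (subsetP sTX x xT) reachN.
have /conform_playP[_ ev _] := cv; have vX i : v i \in X by case/and3P: (ev i).
have recH M : exists2 i, M <= i & pri (v i) = h.
  by have [i Mi /setIdP[_ /eqP]] := recN M; exists i.
have := Limsup_of_recurrent (win v cv) (fun i => leh _ (vX i)) recH.
by rewrite oh; case: (P).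
Qed.

End TopPriority.

(** * Correctness of Solve *)

Lemma half_budget (q : int) (a c : nat) :
  ((a + c)%:Z <= q)%R -> ((q %/ 2)%Z < c%:Z)%R -> (a%:Z <= (q %/ 2)%Z)%R.
Proof. lia. Qed.

Section Iteration.
Variables (V : finType) (f : {set V} -> {set V} * {set V}).

Definition iter_step :=
  fix rep (n : nat) (X : {set V}) {struct n} : {set V} :=
  match n with
  | 0 => X
  | n'.+1 => let XW := f X in if XW.2 == set0 then XW.1 else rep n' XW.1
  end.

Lemma iter_step_subset n X : (forall Y, (f Y).1 \subset Y) -> iter_step n X \subset X.
Proof.
move=> fsub; elim: n X => [|n IHn] X /=; first exact: subxx.
by case: ifP => _; last apply: subset_trans (IHn _) _; apply: fsub.
Qed.

Variable I : {set V} -> Prop.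
Hypothesis fI : forall X, I X -> I (f X).1.

Lemma iter_step_ind n X : I X -> I (iter_step n X).
Proof. by elim: n X => [|n IHn] X IX //=; case: ifP => _; [apply: fI | apply/IHn/fI]. Qed.

Lemma iter_step_stable n X :
    (forall X, I X -> (f X).2 = set0 -> (f X).1 = X) ->
    (forall X, I X -> (f X).2 != set0 -> (f X).1 \proper X) ->
  I X -> #|X| < n -> (f (iter_step n X)).2 = set0.
Proof.
move=> ffix fproper; elim: n X => [|n IHn] X IX //= ltXn.
case: eqP => [W0 | /eqP W0]; first by rewrite ffix.
apply: IHn; first exact: fI.
by have := proper_card (fproper X IX W0); lia.
Qed.

End Iteration.
Arguments iter_step : simpl never.

Section Procedure.
Variables (V : finType) (e : rel V) (own : V -> bool) (pri : V -> nat).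
Local Notation attr := (attr e own).
Local Notation dominion_in := (dominion_in e own pri).
Local Notation deadlock_free := (deadlock_free e).

Definition top_attrC P h (X : {set V}) := X :\: attr P X [set v in X | pri v == h.+1].

(* The body of the loops (2)-(4) of Solve: the second component is the set W_O
   returned by the recursive call on H, the first one is what remains of G
   after removing the attractor of W_O. *)
Definition solve_step P h p (b : int) (X : {set V}) : {set V} * {set V} :=
  let W := solve e own pri (~~ P) h (top_attrC P h X) b p in
  (X :\: attr (~~ P) X W, W).
Arguments solve_step : simpl never.

Definition solve_rounds P h (U : {set V}) p q : {set V} :=
  let loop := iter_step (solve_step P h p (q %/ 2)%Z) #|V|.+1 in
  let XW := solve_step P h p q (loop U) in
  if XW.2 == set0 then XW.1 else loop XW.1.

Lemma solveS P h (U : {set V}) p q : solve e own pri P h.+1 U p q =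
  if (U == set0) || (p <= 1)%R then set0 else solve_rounds P h U p q.
Proof. by cbn beta iota delta [solve]. Qed.

Lemma solve_step_subset P h p b X : (solve_step P h p b X).1 \subset X.
Proof. exact: subsetDl. Qed.

Lemma solve_subset P h (U : {set V}) p q : solve e own pri P h U p q \subset U.
Proof.
case: h => [|h]; first exact: sub0set.
have step_sub := solve_step_subset P h p.
have iter_sub n X : iter_step (solve_step P h p (q %/ 2)%Z) n X \subset X.
  exact: iter_step_subset.
rewrite solveS /solve_rounds; case: ifP => _ /=; first exact: sub0set.
have sU2 := iter_sub #|V|.+1 U; case: ifP => _; first exact: subset_trans (step_sub _ _) sU2.
exact: subset_trans (iter_sub _ _) (subset_trans (step_sub _ _) sU2).
Qed.

Section Step.
Variables (P : bool) (h : nat) (p b : int) (X : {set V}).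
Local Notation step := (solve_step P h p b X).

Lemma solve_step_won : step.2 \subset top_attrC P h X.
Proof. exact: solve_subset. Qed.

Lemma solve_step1 : step.1 = X :\: attr (~~ P) X step.2.
Proof. by []. Qed.

Lemma solve_step_fix : deadlock_free X -> step.2 = set0 -> step.1 = X.
Proof. by move=> dX W0; rewrite solve_step1 W0 attr_set0 ?setD0. Qed.

Lemma solve_step_proper : step.2 != set0 -> step.1 \proper X.
Proof.
case/set0Pn=> w wW; have /setDP[wX _] := subsetP solve_step_won w wW.
apply/properP; split; first exact: solve_step_subset.
by exists w => //; rewrite solve_step1 inE (mem_attr _ _ _ wW wX).
Qed.

End Step.

Definition solve_spec h := forall P (U : {set V}) (p q : int),
  deadlock_free U -> {in U, forall y, pri y <= h} -> odd h = ~~ P -> forall S,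
  (dominion_in U P S -> (#|S|%:Z <= p)%R -> S \subset solve e own pri P h U p q) /\
  (dominion_in U (~~ P) S -> (#|S|%:Z <= q)%R -> S :&: solve e own pri P h U p q = set0).

Lemma solve_spec0 : (forall v, 0 < pri v) -> solve_spec 0.
Proof.
move=> pos P U p q _ leh _ S; split=> [[/subsetP sSU _] _ | _ _]; last exact: setI0.
apply/subsetP=> y yS; have := leh y (sSU y yS); by rewrite leqNgt pos.
Qed.

Section InductiveStep.
Variable h : nat.
Hypothesis IH : solve_spec h.

Section Arena.
Variables (P : bool) (U : {set V}) (p q : int).
Hypotheses (dU : deadlock_free U) (leh : {in U, forall y, pri y <= h.+1}).
Hypothesis oh : odd h.+1 = ~~ P.
Local Notation top := (top_attrC P h).
Local Notation step b X := (solve_step P h p b X).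

Lemma top_subgame (X : {set V}) : X \subset U -> deadlock_free X ->
  deadlock_free (top X) /\ {in top X, forall y, pri y <= h}.
Proof.
move=> sXU dX; rewrite /top_attrC; split; first exact: deadlock_free_attrC.
move=> y /setDP[yX yA]; have := leh (subsetP sXU y yX).
rewrite leq_eqVlt => /orP[/eqP yh | //]; case/negP: yA.
by apply: (mem_attr _ _ _ _ yX); rewrite inE yX yh eqxx.
Qed.

Lemma solve_step_spec b (X : {set V}) : X \subset U -> deadlock_free X -> forall Z,
  (dominion_in (top X) (~~ P) Z -> (#|Z|%:Z <= b)%R -> Z \subset (step b X).2) /\
  (dominion_in (top X) P Z -> (#|Z|%:Z <= p)%R -> Z :&: (step b X).2 = set0).
Proof.
move=> sXU dX Z; have [dH leH] := top_subgame sXU dX.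
have ohP : odd h = ~~ ~~ P by move: oh; rewrite /= negbK; case: odd; case: (P).
by have := IH b p dH leH ohP Z; rewrite negbK.
Qed.

Section OwnDominion.
Variable S : {set V}.
Hypothesis leSp : (#|S|%:Z <= p)%R.
Let retains (X : {set V}) := [/\ X \subset U, deadlock_free X & dominion_in X P S].

Lemma solve_step_retains b (X : {set V}) : retains X -> retains (step b X).1.
Proof.
case=> sXU dX domS; have sX1X := solve_step_subset P h p b X.
have domH : dominion_in (top X) P (S :&: top X).
  apply: (dominion_in_restrict domS (subsetDl _ _)) => y z _ yH oy zX eyz _.
  rewrite /top_attrC in yH *.
  exact: attrC_closed yH oy zX eyz.
have SW : S :&: (step b X).2 = set0.
  have := (solve_step_spec b sXU dX _).2 domH.
  rewrite -setIA (setIidPr (solve_step_won _ _ _ _ _)); apply; apply: le_trans leSp.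
  by rewrite lez_nat subset_leq_card // subsetIl.
have SA := dominion_in_attr_disjoint domS SW.
have sSX1 : S \subset (step b X).1.
  rewrite solve_step1; apply/subsetP=> y yS; rewrite inE (subsetP domS.1 y yS) andbT.
  by apply/negP => yA; move/setP: SA => /(_ y); rewrite inE yS yA in_set0.
split; [exact: subset_trans sX1X sXU | by rewrite solve_step1; apply: deadlock_free_attrC |].
have := dominion_in_restrict domS sX1X (fun y z _ _ _ _ _ zS => subsetP sSX1 z zS).
by rewrite (setIidPl sSX1).
Qed.

Lemma solve_rounds_own : dominion_in U P S -> S \subset solve_rounds P h U p q.
Proof.
move=> domS; have rU : retains U by [].
have rU2 := iter_step_ind (solve_step_retains (q %/ 2)%Z) #|V|.+1 rU.
have rU3 := solve_step_retains q rU2.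
rewrite /solve_rounds; case: ifP => _; first by case: rU3 => _ _ [].
by case: (iter_step_ind (solve_step_retains (q %/ 2)%Z) #|V|.+1 rU3) => _ _ [].
Qed.

End OwnDominion.

Section OpponentDominion.
Variable S : {set V}.
Hypothesis leSq : (#|S|%:Z <= q)%R.
Let retains (X : {set V}) := [/\ X \subset U, deadlock_free X & dominion_in X (~~ P) (S :&: X)].

Lemma solve_step_retains_opp b (X : {set V}) : retains X -> retains (step b X).1.
Proof.
case=> sXU dX domS; have sX1X := solve_step_subset P h p b X.
split; [exact: subset_trans sX1X sXU | by rewrite solve_step1; apply: deadlock_free_attrC |].
have := dominion_in_restrict domS sX1X _; rewrite -setIA (setIidPr sX1X); apply.
by move=> y z _; rewrite solve_step1 => yX1 oy zX eyz _; apply: attrC_closed yX1 oy zX eyz.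
Qed.

Lemma solve_step_catches (X : {set V}) : retains X -> S :&: X != set0 ->
  exists2 Z, Z != set0 &
    Z \subset S :&: X /\ forall b, (#|Z|%:Z <= b)%R -> Z \subset (step b X).2.
Proof.
case=> sXU dX domS SX0.
have [Z [Z0 sZ domZ]] := dominion_in_attrC_top dX (fun y yX => leh (subsetP sXU y yX)) oh domS SX0.
by exists Z => //; split=> // b; apply: (solve_step_spec b sXU dX Z).1.
Qed.

Lemma solve_step_stable b (X : {set V}) : retains X ->
  (step b (iter_step (solve_step P h p b) #|V|.+1 X)).2 = set0.
Proof.
move=> rX; apply: (iter_step_stable (solve_step_retains_opp b)) rX _.
- by move=> Y [_ dY _]; apply: solve_step_fix.
- by move=> Y _; apply: solve_step_proper.
- by rewrite ltnS max_card.
Qed.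

Lemma stable_step_disjoint b (X : {set V}) : retains X -> (step b X).2 = set0 ->
  (#|S :&: X|%:Z <= b)%R -> S :&: X = set0.
Proof.
move=> rX W0 leb; apply/eqP; apply: contraT => SX0.
have [Z Z0 [sZ caught]] := solve_step_catches rX SX0.
have : Z \subset (step b X).2.
  by apply: caught; apply: le_trans leb; rewrite lez_nat subset_leq_card.
by rewrite W0 subset0 (negbTE Z0).
Qed.

Lemma solve_step_halves (X Z : {set V}) : Z \subset S :&: X -> Z \subset (step q X).2 ->
  ((q %/ 2)%Z < #|Z|%:Z)%R -> (#|S :&: (step q X).1|%:Z <= (q %/ 2)%Z)%R.
Proof.
move=> sZ ZW bZ; apply: half_budget bZ; apply: le_trans leSq; rewrite lez_nat.
have disj : (S :&: (step q X).1) :&: Z = set0.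
  apply/setP=> z; rewrite solve_step1 !inE.
  case zZ: (z \in Z); rewrite ?andbF //; have /setIP[_ zX] := subsetP sZ z zZ.
  by rewrite (mem_attr _ _ _ (subsetP ZW z zZ) zX) /= andbF.
rewrite -cardsUI disj cards0 addn0; apply: subset_leq_card.
by rewrite subUset subsetIl (subset_trans sZ) ?subsetIl.
Qed.

Lemma solve_rounds_opponent : dominion_in U (~~ P) S -> S :&: solve_rounds P h U p q = set0.
Proof.
move=> domS; rewrite /solve_rounds; set b := (q %/ 2)%Z.
set loop := iter_step (solve_step P h p b) #|V|.+1.
have rU : retains U by split=> //; rewrite (setIidPl domS.1).
have rU2 : retains (loop U) := iter_step_ind (solve_step_retains_opp b) _ rU.
have [SU20 | SU2] := eqVneq (S :&: loop U) set0.
  apply/eqP; rewrite -subset0 -SU20 setIS //; case: ifP => _; first exact: solve_step_subset.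
  apply: subset_trans (iter_step_subset _ _ (solve_step_subset P h p b)) _.
  exact: solve_step_subset.
have [Z Z0 [sZ caught]] := solve_step_catches rU2 SU2.
have bZ : (b < #|Z|%:Z)%R.
  rewrite ltNge; apply/negP => /caught; rewrite solve_step_stable // subset0.
  exact/negP.
have ZW3 : Z \subset (step q (loop U)).2.
  apply: caught; apply: le_trans leSq; rewrite lez_nat.
  by apply: subset_leq_card; apply: subset_trans sZ (subsetIl _ _).
have W3 : (step q (loop U)).2 != set0.
  by apply: contraNneq Z0 => W0; rewrite -subset0 -W0.
rewrite (negbTE W3); set U3 := (step q (loop U)).1.
have rU3 : retains U3 := solve_step_retains_opp q rU2.
have leU3 : (#|S :&: U3|%:Z <= b)%R := solve_step_halves sZ ZW3 bZ.
apply: stable_step_disjoint (iter_step_ind (solve_step_retains_opp b) _ rU3) _ _.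
  exact: solve_step_stable.
apply: le_trans leU3; rewrite lez_nat subset_leq_card // setIS //.
exact: iter_step_subset (solve_step_subset P h p b).
Qed.

End OpponentDominion.
End Arena.

Lemma solve_specS : (forall v, ~~ e v v) -> solve_spec h.+1.
Proof.
move=> noloop P U p q dU leh oh S; rewrite solveS.
case: ifP => [/orP[/eqP U0 | p1] | /norP[_ /negbTE p1]].
- by split=> [[sSU _] _ | _ _]; rewrite ?setI0 // -U0.
- split=> [domS leSp | _ _]; last exact: setI0.
  by rewrite (dominion_in_card_le1 domS) ?sub0set //; move: leSp p1; lia.
- split=> [domS leSp | domS leSq].
    exact: solve_rounds_own.
  exact: solve_rounds_opponent.
Qed.

End InductiveStep.

Lemma solve_correct : (forall v, ~~ e v v) -> (forall v, 0 < pri v) -> forall h, solve_spec h.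
Proof. by move=> noloop pos; elim=> [|h IH]; [apply: solve_spec0 | apply: solve_specS]. Qed.

End Procedure.

Theorem lemma1 (V : finType) (e : rel V) (own : V -> bool) (pri : V -> nat)
    (Hsucc : forall v, exists w, e v w)
    (Hnoloop : forall v, ~~ e v v)
    (Hpos : forall v, 0 < pri v)
    (h : nat) (Hh_even : ~~ odd h) (Hh_max : forall v, pri v <= h)
    (pE pO : int) :
  forall S : {set V},
    (dominion e own pri true S -> (#|S|%:Z <= pE)%R ->
       S \subset SolveE e own pri [set: V] h pE pO) /\
    (dominion e own pri false S -> (#|S|%:Z <= pO)%R ->
       S :&: SolveE e own pri [set: V] h pE pO = set0).
Proof.
move=> S; have dT : deadlock_free e [set: V].
  by move=> v _; have [w evw] := Hsucc v; exists w; rewrite ?inE.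
have oh : odd h = ~~ true by rewrite (negbTE Hh_even).
have [own_dom opp_dom] :=
  solve_correct own Hnoloop Hpos pE pO dT (fun y _ => Hh_max y) oh S.
by split=> /(dominion_in_setT Hsucc); [apply: own_dom | apply: opp_dom].
Qed.
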